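(* Let $G=F\rtimes_\phi\langle t\rangle$ be a $\{$f.g. free$\}$-by-cyclic group that admits UPG monodromy (not necessarily for the splitting given by $\phi$). If $g,h\in F\cdot t$ are distinct, then $g$ and $h$ do not have a common nontrivial power.
   Context: $F$ is a finitely generated free group, $\phi\in\mathrm{Aut}(F)$, and $t$ generates the $\mathbf{Z}$ factor. ''$G$ admits UPG monodromy'' means $G$ can be written as $F'\rtimes_{\psi}\mathbf{Z}$ with $F'$ finitely generated free and $[\psi]\in\mathrm{Out}(F')$ UPG: every conjugacy class grows at most polynomially in cyclic word length under iteration, and the induced map on $F'^{ab}$ is unipotent. Two elements have a common nontrivial power if $g^m=h^n\ne1$ for some integers $m,n$. *)

From mathcomp Require Import all_boot all_order all_algebra.
Set Implicit Arguments. Unset Strict Implicit. Unset Printing Implicit Defensive.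
Import GRing.Theory.

(* A letter: generator x_i (b = false) or its inverse x_i^-1 (b = true). *)
Definition letter (n : nat) := ('I_n * bool)%type.
Definition word (n : nat) := seq (letter n).
Definition linv n (x : letter n) : letter n := (x.1, ~~ x.2).
Definition winv n (w : word n) : word n := rev (map (@linv n) w).
Definition gen n (i : 'I_n) : word n := [:: (i, false)].

Definition reduced n (w : word n) : bool :=
  if w is a :: s then path (fun x y => y != linv x) a s else true.

Definition cons_red n (a : letter n) (w : word n) : word n :=
  if w is b :: t then (if b == linv a then t else a :: w) else [:: a].
Definition reduce n (w : word n) : word n := foldr (@cons_red n) [::] w.

Definition wmul n (u v : word n) : word n := reduce (u ++ v).

Definition endo (n : nat) := 'I_n -> word n.
Definition wapp n (f : endo n) (w : word n) : word n :=
  reduce (flatten (map (fun x : letter n => if x.2 then winv (f x.1) else f x.1) w)).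

Definition inverse_pair n (f g : endo n) : Prop :=
  (forall i, wapp f (g i) = gen i) /\ (forall i, wapp g (f i) = gen i).

(* phi^k for k : int, where phi = f and phi^-1 = g *)
Definition epow n (f g : endo n) (k : int) : word n -> word n :=
  match k with
  | Posz m => iter m (wapp f)
  | Negz m => iter m.+1 (wapp g)
  end.

(* The semidirect product G = F_n x|_phi <t>, with t u t^-1 = phi(u).
   An element (u, a) (u reduced) stands for u t^a. *)
Definition selt (n : nat) := (word n * int)%type.
Definition svalid n (x : selt n) : bool := reduced x.1.
Definition sone n : selt n := ([::], 0%R).
Definition smul n (f g : endo n) (x y : selt n) : selt n :=
  (wmul x.1 (epow f g x.2 y.1), (x.2 + y.2)%R).
Definition sinv n (f g : endo n) (x : selt n) : selt n :=
  (epow f g (- x.2)%R (winv x.1), (- x.2)%R).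
Definition spow n (f g : endo n) (x : selt n) (m : int) : selt n :=
  match m with
  | Posz k => iter k (smul f g x) (sone n)
  | Negz k => iter k.+1 (smul f g (sinv f g x)) (sone n)
  end.

Definition siso n (f g : endo n) n' (f' g' : endo n') (F : selt n -> selt n') : Prop :=
  [/\ (forall x, svalid x -> svalid (F x)),
      (forall x y, svalid x -> svalid y -> F (smul f g x y) = smul f' g' (F x) (F y)),
      (forall x y, svalid x -> svalid y -> F x = F y -> x = y) &
      (forall y, svalid y -> exists2 x, svalid x & F x = y)].

(* UPG: (1) every conjugacy class grows at most polynomially in cyclic word
   length (cyclic length of w = minimal length of a reduced conjugate);
   (2) the induced map on the abelianization Z^n is unipotent. *)
Definition poly_growth n (f : endo n) : Prop :=
  forall w : word n, reduced w ->
    exists C d : nat, forall k : nat,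
      exists u : word n, size (reduce (winv u ++ iter k (wapp f) w ++ u)) <= C * k.+1 ^ d.

(* exponent-sum matrix: row i = image of x_i in Z^n *)
Definition abmx n (f : endo n) : 'M[int]_n :=
  \matrix_(i, j) ((count (pred1 (j, false)) (f i))%:Z - (count (pred1 (j, true)) (f i))%:Z)%R.

Definition unipotent_ab n (f : endo n) : Prop :=
  exists k : nat, ((abmx f - 1%:M) ^+ k = 0)%R.

Definition UPG n (f : endo n) : Prop := poly_growth f /\ unipotent_ab f.

Definition admits_UPG_monodromy n (f g : endo n) : Prop :=
  exists n' (f' g' : endo n') (F : selt n -> selt n'),
    [/\ inverse_pair f' g', UPG f' & siso f g f' g' F].

Definition common_nontriv_power n (f g : endo n) (x y : selt n) : Prop :=
  exists m k : int, spow f g x m = spow f g y k /\ spow f g x m <> sone n.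

(* A common power of [u t] and [v t] must be [(u t)^m = (v t)^m], since
   [t]-exponents add up; so it suffices that roots are unique in the UPG
   splitting, and only the unipotence of the monodromy on the abelianisation
   is needed. In complex coordinates where that action is lower
   unitriangular, the Magnus map [x_i |-> 1 + sum_l P_il X_l] into
   noncommutative power series turns the monodromy into a substitution [psi]
   such that [psi d - d] has larger weighted order than [d] (with weight
   [2n+1-l] on [X_l]). The free part of [(p t^r)^j] is sent to
   [a psi^r(a) psi^2r(a) ...], and comparing two such products order by
   order gives [a = b], hence [p = q]: the Magnus map is injective on reduced
   words, its coefficient at the syllable skeleton being the product of the
   syllable exponents. Negative [r] is reduced to positive [r] by swapping
   [phi] and [phi^-1]. *)

From HB Require Import structures.
From mathcomp Require Import all_boot all_order all_algebra all_field.
From mathcomp Require boolp.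
From mathcomp Require Import zify ring.
Set Implicit Arguments. Unset Strict Implicit. Unset Printing Implicit Defensive.
Import GRing.Theory Num.Theory.
Local Open Scope ring_scope.

Section Words.
Variable n : nat.
Implicit Types (a b : letter n) (w : word n).

Lemma linvK a : linv (linv a) = a.
Proof. by case: a => i b; rewrite /linv /= negbK. Qed.

Lemma winv_cons a w : winv (a :: w) = winv w ++ [:: linv a].
Proof. by rewrite /winv /= rev_cons cats1. Qed.

Lemma winvK : involutive (@winv n).
Proof. by move=> w; rewrite /winv map_rev revK -map_comp map_id_in // => a _ /=; rewrite linvK. Qed.

Lemma reduced_cons a w :
  reduced (a :: w) = (if w is b :: _ then b != linv a else true) && reduced w.
Proof. by case: w. Qed.

Lemma reduced_behead a w : reduced (a :: w) -> reduced w.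
Proof. by rewrite reduced_cons => /andP[]. Qed.

Lemma reduced_cat (s t : word n) : reduced (s ++ t) =
  [&& reduced s, reduced t & if (s, t) is (x :: s', y :: _)
                             then y != linv (last x s') else true].
Proof.
case: s => [|x s] /=; first by rewrite andbT.
rewrite cat_path; case: t => [|y t] /=; first by rewrite !andbT.
by rewrite [in RHS](andbC (path _ y t)).
Qed.

Lemma reduce_reduced w : reduced (reduce w).
Proof.
elim: w => [|a w IH] //=; move: IH; rewrite /cons_red; case: (reduce w) => [|b t] //.
by case: ifP => [_ /reduced_behead|/negbT ne rbt] //; rewrite reduced_cons ne.
Qed.

Lemma winv_reduced w : reduced w -> reduced (winv w).
Proof.
elim: w => [|a w IH] // red; rewrite winv_cons reduced_cat IH ?(reduced_behead red) //=.
case: w red {IH} => [|b w] //; rewrite reduced_cons winv_cons => /andP[ne _].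
case: (winv w) => [|x s] /=; rewrite ?last_cat /=;
  by apply: contra ne => /eqP ->; rewrite linvK.
Qed.

Lemma reduced_winv_cat a p b q : reduced (a :: p) -> reduced (b :: q) -> a != b ->
  reduced (winv (a :: p) ++ b :: q).
Proof.
move=> rp rq ne; rewrite reduced_cat winv_reduced // rq winv_cons /=.
case E: (winv p ++ [:: linv a]) => [|x s]; first by case: (winv p) E.
by have := congr1 (last x) E; rewrite last_cat /= => <-; rewrite linvK eq_sym.
Qed.

End Words.

Section SeriesRing.
Variables (R : comNzRingType) (n : nat).

(* Noncommutative formal power series in [X_0, ..., X_(n-1)]: the
   coefficient of the monomial [X_(l1) ... X_(lk)] is at the word [[:: l1; ...; lk]]. *)
Definition series := seq 'I_n -> R.
HB.instance Definition _ := boolp.gen_eqMixin series.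
HB.instance Definition _ := boolp.gen_choiceMixin series.

Lemma series_ext (a b : series) : (forall w, a w = b w) -> a = b.
Proof. exact: boolp.funext. Qed.

Definition series_add (a b : series) : series := fun w => a w + b w.
Definition series_opp (a : series) : series := fun w => - a w.

Lemma series_addA : associative series_add.
Proof. by move=> a b c; apply: series_ext => w; rewrite /series_add addrA. Qed.
Lemma series_addC : commutative series_add.
Proof. by move=> a b; apply: series_ext => w; rewrite /series_add addrC. Qed.
Lemma series_add0 : left_id (fun=> 0) series_add.
Proof. by move=> a; apply: series_ext => w; rewrite /series_add add0r. Qed.
Lemma series_addN : left_inverse (fun=> 0) series_opp series_add.
Proof. by move=> a; apply: series_ext => w; rewrite /series_add /series_opp addNr. Qed.
HB.instance Definition _ :=
  GRing.isZmodule.Build series series_addA series_addC series_add0 series_addN.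

Definition lquot (l : 'I_n) (a : series) : series := fun w => a (l :: w).

(* In a factorisation [w = u v], either [u] is empty or it starts with the
   first letter of [w]. *)
Fixpoint mul_coef (w : seq 'I_n) (a b : series) : R :=
  if w is l :: w' then mul_coef w' (lquot l a) b + a [::] * b w
  else a [::] * b [::].

Definition series_mul (a b : series) : series := fun w => mul_coef w a b.
Definition cst (c : R) : series := fun w => if w is [::] then c else 0.

Lemma mul_coefDl w a b c : mul_coef w (a + b) c = mul_coef w a c + mul_coef w b c.
Proof.
elim: w a b => [|l w IH] a b /=; first exact: mulrDl.
by rewrite (IH (lquot l a)) mulrDl addrACA.
Qed.

Lemma mul_coefDr w a b c : mul_coef w a (b + c) = mul_coef w a b + mul_coef w a c.
Proof.
elim: w a => [|l w IH] a /=; first exact: mulrDr.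
by rewrite IH (mulrDr (a [::])) addrACA.
Qed.

Lemma mul_coef0l w b : mul_coef w 0 b = 0.
Proof. by elim: w => [|l w IH] /=; rewrite ?mul0r // [lquot _ _]/= IH addr0. Qed.

Lemma mul_coefMl w c a b :
  mul_coef w (fun v => c * a v) b = c * mul_coef w a b.
Proof.
elim: w a => [|l w IH] a /=; first exact/esym/mulrA.
by rewrite (IH (lquot l a)) mulrDr mulrA.
Qed.

Lemma series_mulA : associative series_mul.
Proof.
move=> a b c; apply: series_ext => w; rewrite /series_mul.
elim: w a b c => [|l w IH] a b c /=; first by rewrite mulrA.
have -> : lquot l (series_mul a b) =
          series_mul (lquot l a) b + (fun v => a [::] * lquot l b v) by [].
by rewrite mul_coefDl mul_coefMl IH /= mulrDr mulrA addrA.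
Qed.

Lemma series_mul1 : left_id (cst 1) series_mul.
Proof.
move=> a; apply: series_ext => -[|l w] /=; rewrite /series_mul /= mul1r //.
have -> : lquot l (cst 1) = 0 by apply: series_ext.
by rewrite mul_coef0l add0r.
Qed.

Lemma series_mulr1 : right_id (cst 1) series_mul.
Proof.
move=> a; apply: series_ext => w; rewrite /series_mul.
by elim: w a => [|l w IH] a /=; rewrite ?mulr1 // IH mulr0 addr0.
Qed.

Lemma series_mulDl : left_distributive series_mul +%R.
Proof. by move=> a b c; apply: series_ext => w; apply: mul_coefDl. Qed.
Lemma series_mulDr : right_distributive series_mul +%R.
Proof. by move=> a b c; apply: series_ext => w; apply: mul_coefDr. Qed.
Lemma series1_neq0 : cst 1 != 0.
Proof. by apply/eqP => /(congr1 (fun a => a [::])) /eqP; rewrite oner_eq0. Qed.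
HB.instance Definition _ := GRing.Zmodule_isNzRing.Build series
  series_mulA series_mul1 series_mulr1 series_mulDl series_mulDr series1_neq0.

Implicit Types (a b : series) (c : R) (l : 'I_n) (w : seq 'I_n).

Lemma ser_addE a b w : (a + b) w = a w + b w. Proof. by []. Qed.
Lemma ser_oppE a w : (- a) w = - a w. Proof. by []. Qed.
Lemma ser_subE a b w : (a - b) w = a w - b w. Proof. by []. Qed.
Lemma ser_0E w : (0 : series) w = 0. Proof. by []. Qed.
Lemma ser_1E w : (1 : series) w = if w is [::] then 1 else 0. Proof. by []. Qed.
Lemma ser_sumE I (r : seq I) (P : pred I) (F : I -> series) w :
  (\sum_(i <- r | P i) F i) w = \sum_(i <- r | P i) F i w.
Proof. by elim/big_rec2: _ => // i y1 y2 _ <-. Qed.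
Lemma ser_mul_nil a b : (a * b) [::] = a [::] * b [::]. Proof. by []. Qed.
Lemma ser_mul_cons a b l w :
  (a * b) (l :: w) = (lquot l a * b) w + a [::] * b (l :: w).
Proof. by []. Qed.
Lemma ser_mul_cons0 a b l w : a [::] = 0 -> (a * b) (l :: w) = (lquot l a * b) w.
Proof. by move=> a0; rewrite ser_mul_cons a0 mul0r addr0. Qed.
Lemma cstE c w : cst c w = if w is [::] then c else 0. Proof. by []. Qed.
Lemma lquotE l a w : lquot l a w = a (l :: w). Proof. by []. Qed.

Lemma lquot_cst l c : lquot l (cst c) = 0. Proof. by apply: series_ext. Qed.
Lemma lquotD l a b : lquot l (a + b) = lquot l a + lquot l b. Proof. by []. Qed.

Lemma cst_mulE c a w : (cst c * a) w = c * a w.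
Proof. by case: w => [|l w] //; rewrite ser_mul_cons lquot_cst [(0 * a) w]mul_coef0l add0r. Qed.

Lemma mul_cstE c a w : (a * cst c) w = a w * c.
Proof. by elim: w a => [|l w IH] a //; rewrite ser_mul_cons IH /= mulr0 addr0. Qed.

Lemma cst_comm c a : cst c * a = a * cst c.
Proof. by apply: series_ext => w; rewrite cst_mulE mul_cstE mulrC. Qed.

Lemma cst0 : cst 0 = 0. Proof. by apply: series_ext => -[]. Qed.
Lemma cst1 : cst 1 = 1. Proof. by []. Qed.
Lemma cstD c c' : cst (c + c') = cst c + cst c'.
Proof. by apply: series_ext => -[|l w] //=; rewrite ser_addE !cstE addr0. Qed.
Lemma cstM c c' : cst (c * c') = cst c * cst c'.
Proof. by apply: series_ext => w; rewrite cst_mulE !cstE; case: w; rewrite ?mulr0. Qed.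
Lemma cst_nat k : cst k%:R = k%:R.
Proof. by elim: k => [|k IH]; rewrite ?cst0 // !mulrS cstD IH. Qed.
Lemma cst_sum I (r : seq I) (P : pred I) (F : I -> R) :
  cst (\sum_(i <- r | P i) F i) = \sum_(i <- r | P i) cst (F i).
Proof. by elim/big_rec2: _ => [|i x y _ <-]; rewrite ?cst0 // cstD. Qed.

Lemma lquotM l a b : lquot l (a * b) = lquot l a * b + cst (a [::]) * lquot l b.
Proof. by apply: series_ext => w; rewrite lquotE ser_mul_cons ser_addE cst_mulE. Qed.

Definition svar l : series := fun w => if w is [:: m] then (m == l)%:R else 0.

Lemma svar_nil l : svar l [::] = 0. Proof. by []. Qed.
Lemma lquot_svar m l : lquot m (svar l) = cst (m == l)%:R.
Proof. by apply: series_ext => -[|x w]. Qed.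

Lemma series_decomp a : a = cst (a [::]) + \sum_(l < n) svar l * lquot l a.
Proof.
apply: series_ext => -[|m w]; rewrite ser_addE ser_sumE.
  by rewrite big1 ?addr0 // => l _; rewrite ser_mul_nil svar_nil mul0r.
rewrite cstE add0r (bigD1 m) //= big1 => [|l /negbTE ne].
  by rewrite ser_mul_cons lquot_svar cst_mulE eqxx mul1r svar_nil mul0r !addr0.
by rewrite ser_mul_cons lquot_svar cst_mulE eq_sym ne mul0r svar_nil mul0r addr0.
Qed.

Lemma ser_mul_local_le a b b' w :
  (forall v, (size v <= size w)%N -> b v = b' v) -> (a * b) w = (a * b') w.
Proof.
elim: w a => [|l w IH] a H; first by rewrite !ser_mul_nil H.
rewrite !ser_mul_cons H // (IH (lquot l a)) // => v hv.
exact/H/(leq_trans hv).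
Qed.

Lemma ser_mul_local_lt a b b' w : a [::] = 0 ->
  (forall v, (size v < size w)%N -> b v = b' v) -> (a * b) w = (a * b') w.
Proof.
case: w => [|l w] a0 H; first by rewrite !ser_mul_nil a0 !mul0r.
by rewrite !ser_mul_cons0 //; apply: ser_mul_local_le.
Qed.

End SeriesRing.

Arguments cst {R n}.
Arguments svar {R n}.

Lemma size_ind T (P : seq T -> Prop) :
  (forall w, (forall v, (size v < size w)%N -> P v) -> P w) -> forall w, P w.
Proof.
move=> H w; elim: {w}(size w) {-2}w (leqnn (size w)) => [|k IH] w hw.
  by apply: H => v; rewrite leqn0 in hw; rewrite (eqP hw).
by apply: H => v hv; apply: IH; rewrite -ltnS (leq_trans hv hw).
Qed.

Section Substitution.
Variables (R : comNzRingType) (n : nat).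
Local Notation series := (series R n).
Variable phi : 'I_n -> series.
Hypothesis phi0 : forall l, phi l [::] = 0.

(* [ssubst] substitutes [phi l] for the variable [l]; as every [phi l] has no
   constant term, the coefficient at [w] only needs [size w] unfoldings of
   the recursive equation [ssubst_rec]. *)
Fixpoint ssubst_coef (k : nat) (a : series) (w : seq 'I_n) : R :=
  if k is k'.+1 then
    cst (a [::]) w + \sum_(l < n) mul_coef w (phi l) (ssubst_coef k' (lquot l a))
  else cst (a [::]) w.

Definition ssubst (a : series) : series := fun w => ssubst_coef (size w) a w.

Lemma ssubst_coef_nil k a : ssubst_coef k a [::] = a [::].
Proof.
case: k => [|k] //=; rewrite big1 ?addr0 // => l _.
by rewrite phi0 mul0r.
Qed.

Lemma ssubst_coef_stable k k' a w : (size w <= k)%N -> (size w <= k')%N ->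
  ssubst_coef k a w = ssubst_coef k' a w.
Proof.
elim: k k' a w => [|k IH] k' a w.
  by rewrite leqn0 => /nilP -> _; rewrite !ssubst_coef_nil.
case: w => [|m w] hk hk'; first by rewrite !ssubst_coef_nil.
case: k' hk' => [|k'] // hk' /=; congr (_ + _); apply: eq_bigr => l _.
rewrite phi0 !mul0r !addr0; apply: ser_mul_local_le => v hv.
by apply: IH; apply: leq_trans hv _.
Qed.

Lemma ssubst_rec a : ssubst a = cst (a [::]) + \sum_(l < n) phi l * ssubst (lquot l a).
Proof.
apply: series_ext => w; rewrite ser_addE ser_sumE; case: w => [|m w].
  by rewrite /ssubst /= big1 ?addr0 // => l _; rewrite ser_mul_nil phi0 mul0r.
rewrite /ssubst /=; congr (_ + _); apply: eq_bigr => l _.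
rewrite ser_mul_cons0 // phi0 mul0r addr0.
apply: (@ser_mul_local_le _ _ _ (ssubst_coef (size w) (lquot l a))) => v hv.
exact: ssubst_coef_stable.
Qed.

Lemma ssubst_nil a : ssubst a [::] = a [::].
Proof. exact: ssubst_coef_nil. Qed.

Lemma ssubst_rec_local (F G : 'I_n -> series) w :
  (forall l v, (size v < size w)%N -> F l v = G l v) ->
  (\sum_(l < n) phi l * F l) w = (\sum_(l < n) phi l * G l) w.
Proof.
move=> FG; rewrite !ser_sumE; apply: eq_bigr => l _.
by apply: ser_mul_local_lt => //; apply: FG.
Qed.

Lemma ssubstD a b : ssubst (a + b) = ssubst a + ssubst b.
Proof.
apply: series_ext => w; elim/size_ind: w a b => w IH a b.
rewrite ssubst_rec ser_addE.
rewrite (@ssubst_rec_local _ (fun l => ssubst (lquot l a) + ssubst (lquot l b)));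
  last by move=> l v hv; rewrite lquotD IH.
rewrite -ser_addE (ssubst_rec a) (ssubst_rec b) [(a + b) [::]]/= cstD.
under eq_bigr do rewrite mulrDr.
by rewrite big_split /= addrACA.
Qed.

Lemma ssubst0 : ssubst 0 = 0.
Proof. by apply: (addIr (ssubst 0)); rewrite -ssubstD !add0r. Qed.

Lemma ssubstN a : ssubst (- a) = - ssubst a.
Proof. by apply/eqP; rewrite -addr_eq0 -ssubstD addNr ssubst0. Qed.

Lemma ssubstB a b : ssubst (a - b) = ssubst a - ssubst b.
Proof. by rewrite ssubstD ssubstN. Qed.

Lemma ssubst_sum I (r : seq I) (P : pred I) (F : I -> series) :
  ssubst (\sum_(i <- r | P i) F i) = \sum_(i <- r | P i) ssubst (F i).
Proof. by elim/big_rec2: _ => [|i x y _ <-]; rewrite ?ssubst0 // ssubstD. Qed.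

Lemma ssubst_cst c : ssubst (cst c) = cst c.
Proof. by rewrite ssubst_rec big1 ?addr0 // => l _; rewrite lquot_cst ssubst0 mulr0. Qed.

Lemma ssubst1 : ssubst 1 = 1.
Proof. exact: ssubst_cst. Qed.

Lemma ssubst_svar l : ssubst (svar l) = phi l.
Proof.
rewrite ssubst_rec svar_nil cst0 add0r (bigD1 l) //= big1 => [|m /negbTE ne].
  by rewrite lquot_svar eqxx ssubst_cst cst1 mulr1 addr0.
by rewrite lquot_svar ne ssubst_cst cst0 mulr0.
Qed.

Lemma ssubstM a b : ssubst (a * b) = ssubst a * ssubst b.
Proof.
apply: series_ext => w; elim/size_ind: w a b => w IH a b.
rewrite ssubst_rec ser_addE (@ssubst_rec_local _
  (fun l => ssubst (lquot l a) * ssubst b + cst (a [::]) * ssubst (lquot l b)));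
  last by move=> l v hv; rewrite lquotM ssubstD ser_addE !IH // ssubst_cst.
rewrite -ser_addE (ssubst_rec a) (ssubst_rec b) ser_mul_nil cstM mulrDl mulrDr.
under eq_bigr do rewrite mulrDr.
rewrite big_split /= mulr_suml mulr_sumr [RHS]addrAC -[RHS]addrA.
rewrite !ser_addE !ser_sumE; congr (_ + (_ + _)); apply: eq_bigr => l _.
  by rewrite mulrA.
by rewrite !mulrA cst_comm.
Qed.

Lemma ssubst_subr a : ssubst a - a = \sum_(l < n)
  ((phi l - svar l) * ssubst (lquot l a) + svar l * (ssubst (lquot l a) - lquot l a)).
Proof.
rewrite [X in _ - X]series_decomp ssubst_rec opprD addrACA subrr add0r -sumrB.
by apply: eq_bigr => l _; rewrite mulrBl mulrBr addrA subrK.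
Qed.

Lemma ssubst_linear a m : ssubst a [:: m] = \sum_(l < n) a [:: l] * phi l [:: m].
Proof.
rewrite ssubst_rec ser_addE ser_sumE /= add0r; apply: eq_bigr => l _.
by rewrite ser_mul_cons phi0 mul0r addr0 ser_mul_nil ssubst_nil mulrC.
Qed.

End Substitution.

Section Magnus.
Variables (R : comNzRingType) (n : nat).
Local Notation series := (series R n).
Variable P : 'M[R]_n.

(* The Magnus map sends [x_i] to [1 + sum_l P i l X_l]; its inverse is the
   geometric series [sum_k (- sum_l P i l X_l)^k]. *)
Definition mgen (i : 'I_n) : series := 1 + \sum_(l < n) cst (P i l) * svar l.
Definition mgenV (i : 'I_n) : series := fun w => \prod_(l <- w) - P i l.

Lemma mgen_nil i : mgen i [::] = 1.
Proof.
rewrite /mgen ser_addE ser_sumE big1 ?addr0 // => l _.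
by rewrite cst_mulE svar_nil mulr0.
Qed.

Lemma mgenV_nil i : mgenV i [::] = 1.
Proof. exact: big_nil. Qed.

Lemma lquot_mgen i l : lquot l (mgen i) = cst (P i l).
Proof.
apply: series_ext => v; rewrite lquotE /mgen ser_addE ser_sumE ser_1E add0r.
rewrite (bigD1 l) //= big1 => [|m /negbTE ne]; rewrite cst_mulE /=.
  by rewrite eqxx addr0; case: v => [|x v]; rewrite ?mulr1 ?mulr0.
by case: v => [|x v]; rewrite ?mulr0 // eq_sym ne mulr0.
Qed.

Lemma lquot_mgenV i l : lquot l (mgenV i) = cst (- P i l) * mgenV i.
Proof. by apply: series_ext => v; rewrite cst_mulE lquotE /mgenV big_cons. Qed.

Lemma mgenK i : mgen i * mgenV i = 1.
Proof.
apply: series_ext => -[|l w]; first by rewrite ser_mul_nil mgen_nil mgenV_nil mul1r.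
by rewrite ser_mul_cons lquot_mgen cst_mulE mgen_nil mul1r /mgenV big_cons mulNr addrN.
Qed.

Lemma mgenVK i : mgenV i * mgen i = 1.
Proof.
apply: series_ext; elim => [|l w IH].
  by rewrite ser_mul_nil mgen_nil mgenV_nil mul1r.
rewrite ser_mul_cons lquot_mgenV -mulrA cst_mulE IH mgenV_nil mul1r.
rewrite -lquotE lquot_mgen !ser_1E cstE.
by case: w {IH} => [|x w]; rewrite ?mulr0 ?addr0 // mulr1 addNr.
Qed.

Definition mletter (a : letter n) : series := if a.2 then mgenV a.1 else mgen a.1.
Definition magnus (w : word n) : series := \prod_(a <- w) mletter a.

Lemma mletterK a : mletter a * mletter (linv a) = 1.
Proof. by case: a => i []; rewrite /mletter /= ?mgenVK ?mgenK. Qed.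

Lemma mletterKV a : mletter (linv a) * mletter a = 1.
Proof. by case: a => i []; rewrite /mletter /= ?mgenVK ?mgenK. Qed.

Lemma mletter_nil a : mletter a [::] = 1.
Proof. by case: a => i [] /=; rewrite /mletter /= ?mgenV_nil ?mgen_nil. Qed.

Lemma magnus_nil : magnus [::] = 1. Proof. exact: big_nil. Qed.
Lemma magnus_cons a w : magnus (a :: w) = mletter a * magnus w.
Proof. exact: big_cons. Qed.
Lemma magnus_cat u v : magnus (u ++ v) = magnus u * magnus v.
Proof. exact: big_cat. Qed.
Lemma magnus_seq1 a : magnus [:: a] = mletter a.
Proof. exact: big_seq1. Qed.
Lemma magnus_gen i : magnus (gen i) = mgen i.
Proof. exact: magnus_seq1. Qed.

Lemma magnus_reduce w : magnus (reduce w) = magnus w.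
Proof.
elim: w => [|a w IH] //; rewrite magnus_cons -IH.
change (reduce (a :: w)) with (cons_red a (reduce w)).
case: (reduce w) => [|b t] /=; first exact: magnus_cons.
case: ifP => [/eqP ->|_]; last exact: magnus_cons.
by rewrite magnus_cons mulrA mletterK mul1r.
Qed.

Lemma magnus_wmul u v : magnus (wmul u v) = magnus u * magnus v.
Proof. by rewrite magnus_reduce magnus_cat. Qed.

Lemma magnus_winvK w : magnus w * magnus (winv w) = 1.
Proof.
elim: w => [|a w IH]; first by rewrite /winv /= magnus_nil mulr1.
rewrite winv_cons magnus_cat magnus_seq1 magnus_cons.
by rewrite mulrA -(mulrA (mletter a)) IH mulr1 mletterK.
Qed.

Lemma magnus_winvKV w : magnus (winv w) * magnus w = 1.
Proof.
elim: w => [|a w IH]; first by rewrite /winv /= magnus_nil mulr1.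
rewrite winv_cons magnus_cat magnus_seq1 magnus_cons.
by rewrite -mulrA (mulrA (mletter _)) mletterKV mul1r IH.
Qed.

Lemma magnus_const w : magnus w [::] = 1.
Proof.
elim: w => [|a w IH]; first by rewrite magnus_nil.
by rewrite magnus_cons ser_mul_nil IH mulr1 mletter_nil.
Qed.

Definition expsum (w : word n) (j : 'I_n) : int :=
  (count (pred1 (j, false)) w)%:Z - (count (pred1 (j, true)) w)%:Z.

Lemma expsum_cons a w j :
  expsum (a :: w) j = expsum w j + ((a == (j, false))%:Z - (a == (j, true))%:Z).
Proof. by rewrite /expsum /= !PoszD opprD addrACA addrC. Qed.

Lemma magnus_linear w m : magnus w [:: m] = \sum_(j < n) (expsum w j)%:~R * P j m.
Proof.
elim: w => [|[i b] w IH].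
  by rewrite magnus_nil big1 // => j _; rewrite /expsum /= subrr mul0r.
under eq_bigr do rewrite expsum_cons intrD mulrDl.
rewrite big_split /= -IH magnus_cons ser_mul_cons ser_mul_nil magnus_const mulr1.
rewrite mletter_nil mul1r addrC; congr (_ + _).
rewrite (bigD1 i) //= big1 => [|j /negbTE ne]; last first.
  by rewrite !xpair_eqE eq_sym ne /= subrr mul0r.
rewrite !xpair_eqE eqxx addr0 /mletter /=.
case: b; rewrite ?lquot_mgenV ?lquot_mgen ?cst_mulE ?mgenV_nil ?cstE /=.
  by rewrite mulr1 sub0r mulN1r.
by rewrite subr0 mul1r.
Qed.

End Magnus.

Section SyllableExponents.
Variable n : nat.
Implicit Types (a c : letter n) (w : word n).

Definition lsign a : int := if a.2 then -1 else 1.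
Definition same_gen a w := if w is c :: _ then c.1 == a.1 else false.

(* A reduced word is a product of syllables [x_i^e] with consecutive
   generators distinct: [syll_gens] lists their generators, [first_syll_exp]
   is the exponent of the first syllable and [syll_prod] the product of all
   exponents ([tail_syll_prod] omits the first one). *)
Fixpoint syll_gens w : seq 'I_n :=
  if w is a :: w' then (if same_gen a w' then syll_gens w' else a.1 :: syll_gens w')
  else [::].

Fixpoint first_syll_exp w : int :=
  if w is a :: w' then
    (if same_gen a w' then first_syll_exp w' + lsign a else lsign a)
  else 0.

Fixpoint tail_syll_prod w : int :=
  if w is a :: w' then
    if same_gen a w' then tail_syll_prod w'
    else if w' is [::] then 1 else first_syll_exp w' * tail_syll_prod w'
  else 1.

Definition syll_prod w : int :=
  if w is [::] then 1 else first_syll_exp w * tail_syll_prod w.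

Definition alternating (v : seq 'I_n) := sorted (fun x y => x != y) v.

Lemma syll_gens_cons c w : syll_gens (c :: w) = c.1 :: behead (syll_gens (c :: w)).
Proof. by elim: w c => [|d w IH] c //=; case: ifP => //= /eqP <-; rewrite -IH. Qed.

Lemma syll_gens_same a w : same_gen a w -> syll_gens (a :: w) = syll_gens w.
Proof. by move=> /= ->. Qed.

Lemma syll_gens_new a w : ~~ same_gen a w -> syll_gens (a :: w) = a.1 :: syll_gens w.
Proof. by move=> /negbTE /= ->. Qed.

Lemma first_syll_exp_same a w :
  same_gen a w -> first_syll_exp (a :: w) = first_syll_exp w + lsign a.
Proof. by move=> /= ->. Qed.

Lemma first_syll_exp_new a w : ~~ same_gen a w -> first_syll_exp (a :: w) = lsign a.
Proof. by move=> /negbTE /= ->. Qed.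

Lemma tail_syll_prod_same a w :
  same_gen a w -> tail_syll_prod (a :: w) = tail_syll_prod w.
Proof. by move=> /= ->. Qed.

Lemma tail_syll_prod_new a w : ~~ same_gen a w -> tail_syll_prod (a :: w) = syll_prod w.
Proof. by move=> /negbTE h /=; rewrite h; case: w h. Qed.

Lemma syll_gens_alternating w : alternating (syll_gens w).
Proof.
elim: w => [|a w IH] //; case: (boolP (same_gen a w)) => [same|new].
  by rewrite syll_gens_same.
rewrite syll_gens_new //; case: w new IH => [|c w] // new.
by rewrite syll_gens_cons /alternating /= => ->; rewrite andbT eq_sym.
Qed.

Lemma same_gen_reduced a c w : reduced [:: a, c & w] -> same_gen a (c :: w) -> c = a.
Proof.
case: a c => [i b] [j b'] /andP[+ _] /eqP /= ji; rewrite ji /linv xpair_eqE eqxx /=.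
by case: b b' => -[].
Qed.

Lemma first_syll_exp_sign a w : reduced (a :: w) -> 0 < lsign a * first_syll_exp (a :: w).
Proof.
elim: w a => [|c w IH] a red; first by case: a {red} => i [].
case: (boolP (same_gen a (c :: w))) => [same|new]; last first.
  by rewrite first_syll_exp_new //; case: a {red new} => i [].
rewrite first_syll_exp_same //.
have ca := same_gen_reduced red same; have := IH c (reduced_behead red).
rewrite ca mulrDr.
have -> : lsign a * lsign a = 1 by rewrite /lsign; case: ifP.
by lia.
Qed.

Lemma first_syll_exp_neq0 a w : reduced (a :: w) -> first_syll_exp (a :: w) != 0.
Proof. by move=> /first_syll_exp_sign; apply: contraTneq => ->; rewrite mulr0. Qed.

Lemma tail_syll_prod_neq0 w : reduced w -> tail_syll_prod w != 0.
Proof.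
elim: w => [|a w IH] // red; have redw := reduced_behead red.
rewrite /=; case: ifP => _; first exact: IH.
case: w red redw IH => [|c w] // red redw IH.
by rewrite mulf_neq0 ?first_syll_exp_neq0 ?IH.
Qed.

Lemma syll_prod_neq0 w : reduced w -> syll_prod w != 0.
Proof. by case: w => [|a w] // red; rewrite mulf_neq0 ?first_syll_exp_neq0 ?tail_syll_prod_neq0. Qed.

End SyllableExponents.

Section MagnusFaithful.
Variables (R : numDomainType) (n : nat).
Local Notation M := (magnus (1%:M : 'M[R]_n)).
Implicit Types (a c : letter n) (w : word n) (v : seq 'I_n).

Definition head_neq (i : 'I_n) v := if v is l :: _ then l != i else true.

Lemma alternating_cons l v : alternating (l :: v) -> alternating v /\ head_neq l v.
Proof. by case: v => [|x v] //= /andP[h1 h2]; rewrite eq_sym. Qed.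

Lemma lquot_mletter_neq a l : l != a.1 -> lquot l (mletter (1%:M : 'M[R]_n) a) = 0.
Proof.
case: a => i b /= ne; have P0 : (1%:M : 'M[R]_n) i l = 0 by rewrite mxE eq_sym (negbTE ne).
by case: b; rewrite /mletter /= ?lquot_mgenV ?lquot_mgen P0 ?oppr0 cst0 ?mul0r.
Qed.

Lemma magnus1_cons_head_neq a w v : head_neq a.1 v -> M (a :: w) v = M w v.
Proof.
case: v => [|l v] h; first by rewrite !magnus_const.
by rewrite magnus_cons ser_mul_cons lquot_mletter_neq // mul0r ser_0E mletter_nil mul1r add0r.
Qed.

(* Along an alternating word, [x_i^-1] contributes [- X_i] just like [x_i]
   contributes [X_i]: the higher powers of [X_i] cannot occur. *)
Lemma magnus1_cons_alternating a w l v : alternating (l :: v) ->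
  M (a :: w) (l :: v) = (l == a.1)%:R * (lsign a)%:~R * M w v + M w (l :: v).
Proof.
move=> alv; rewrite magnus_cons ser_mul_cons mletter_nil mul1r; congr (_ + _).
have [e|ne] := eqVneq l a.1; last by rewrite lquot_mletter_neq // !mul0r.
case: a e => i [] /= e; rewrite /mletter /= e ?lquot_mgenV ?lquot_mgen mxE eqxx; last first.
  by rewrite cst_mulE /lsign /= !mul1r.
rewrite -mulrA cst_mulE -[mgenV _ i]/(mletter _ (i, true)) -magnus_cons.
rewrite magnus1_cons_head_neq; last first.
  by have [_] := alternating_cons alv; rewrite e.
by rewrite /lsign /= mul1r mulrN1z.
Qed.

Lemma eq_cons_natr (l i : 'I_n) v v' :
  ((l :: v) == (i :: v'))%:R = (l == i)%:R * (v == v')%:R :> R.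
Proof. by rewrite eqseq_cons; case: (l == i); rewrite ?mul1r ?mul0r. Qed.

(* Induction invariant on [w]; the last clause is what is needed when the
   next letter prolongs the first syllable. *)
Definition skeleton_spec w : Prop :=
  [/\ forall v, alternating v -> (size (syll_gens w) < size v)%N -> M w v = 0,
      forall v, alternating v -> size v = size (syll_gens w) ->
        M w v = (v == syll_gens w)%:R * (syll_prod w)%:~R &
      forall a w', w = a :: w' ->
      forall v, alternating v -> head_neq a.1 v -> (size v).+1 = size (syll_gens w) ->
        M w v = (v == behead (syll_gens w))%:R * (tail_syll_prod w)%:~R].

Lemma skeleton_spec_nil : skeleton_spec [::].
Proof. by split=> // -[|x v] // _ _; rewrite magnus_nil ser_1E //= mulr1. Qed.

Lemma skeleton_spec_same a c w : reduced [:: a, c & w] -> same_gen a (c :: w) ->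
  skeleton_spec (c :: w) -> skeleton_spec [:: a, c & w].
Proof.
move=> red same [A B C]; have ca := same_gen_reduced red same.
have prodE : syll_prod [:: a, c & w] =
    syll_prod (c :: w) + lsign a * tail_syll_prod (c :: w).
  by rewrite /syll_prod tail_syll_prod_same // first_syll_exp_same // mulrDl.
rewrite /skeleton_spec syll_gens_same // tail_syll_prod_same // prodE.
set S := syll_gens (c :: w); have SE : S = a.1 :: behead S by rewrite /S syll_gens_cons ca.
split.
- move=> [|l v] alv // hs; have [alv' hdv] := alternating_cons alv.
  rewrite magnus1_cons_alternating // (A (l :: v)) // addr0.
  have [e|] := eqVneq l a.1; last by rewrite !mul0r.
  have : (size S <= size v)%N by [].
  rewrite leq_eqVlt => /orP[/eqP hs'|hs']; last by rewrite A // !mulr0.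
  rewrite (B v alv' (esym hs')); have [ev|] := eqVneq v S; last by rewrite !mul0r mulr0.
  by move: hdv; rewrite ev SE e /= eqxx.
- move=> [|l v] alv hs; first by rewrite SE in hs.
  have [alv' hdv] := alternating_cons alv.
  rewrite magnus1_cons_alternating // (B (l :: v)) // -/S SE !eq_cons_natr.
  have [e|ne] := eqVneq l a.1; last by rewrite !mul0r add0r.
  have hdv' : head_neq c.1 v by rewrite ca -e.
  have hs' : (size v).+1 = size S := hs.
  by rewrite (C c w erefl v alv' hdv' hs') -/S intrD; ring.
- move=> _ _ [<- _] v alv hdv hs; have hdv' : head_neq c.1 v by rewrite ca.
  by rewrite magnus1_cons_head_neq // (C c w erefl v alv hdv' hs).
Qed.

Lemma skeleton_spec_new a w : ~~ same_gen a w -> skeleton_spec w -> skeleton_spec (a :: w).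
Proof.
move=> new [A B _].
have prodE : syll_prod (a :: w) = lsign a * syll_prod w.
  by rewrite /syll_prod tail_syll_prod_new // first_syll_exp_new.
rewrite /skeleton_spec syll_gens_new // prodE tail_syll_prod_new //; split.
- move=> [|l v] alv // hs; rewrite /= ltnS in hs; have [alv' _] := alternating_cons alv.
  by rewrite magnus1_cons_alternating // (A v) // (A (l :: v)) ?mulr0 ?addr0 // ltnW.
- move=> [|l v] alv // [hs]; have [alv' _] := alternating_cons alv.
  rewrite magnus1_cons_alternating //.
  have -> : M w (l :: v) = 0 by apply: A; rewrite //= hs.
  rewrite addr0 B // eq_cons_natr.
  by rewrite intrM; ring.
- by move=> _ _ [<- _] v alv hdv [hs]; rewrite magnus1_cons_head_neq // B.
Qed.

Lemma magnus1_skeleton w : reduced w -> skeleton_spec w.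
Proof.
elim: w => [|a w IH] red; first exact: skeleton_spec_nil.
have spec := IH (reduced_behead red).
case: (boolP (same_gen a w)) => [same|new]; last exact: skeleton_spec_new.
by case: w same red spec {IH} => // c w same red; apply: skeleton_spec_same.
Qed.

Lemma magnus1_eq1 w : reduced w -> M w = 1 -> w = [::].
Proof.
case: w => [|a w] // red Mw1; have [_ B _] := magnus1_skeleton red.
have := B _ (syll_gens_alternating _) erefl; rewrite eqxx mul1r Mw1 syll_gens_cons ser_1E.
by move/esym/eqP; rewrite intr_eq0 (negbTE (syll_prod_neq0 red)).
Qed.

Lemma magnus1_inj p q : reduced p -> reduced q -> M p = M q -> p = q.
Proof.
elim: p q => [|a p IH] [|b q] rp rq e //.
- by have := magnus1_eq1 rq; rewrite -e magnus_nil => /(_ erefl).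
- by have := magnus1_eq1 rp; rewrite e magnus_nil => /(_ erefl).
move: e; have [<-|ne] := eqVneq a b => e.
  congr (_ :: _); apply: IH (reduced_behead rp) (reduced_behead rq) _.
  move: e; rewrite !magnus_cons => e.
  by rewrite -[M p]mul1r -(mletterKV (1%:M : 'M[R]_n) a) -mulrA e mulrA mletterKV mul1r.
have := magnus1_eq1 (reduced_winv_cat rp rq ne).
by rewrite magnus_cat -e magnus_winvKV => /(_ erefl); case: (winv _).
Qed.

End MagnusFaithful.

Definition wsubst n m (h : 'I_n -> word m) (w : word n) : word m :=
  flatten [seq if a.2 then winv (h a.1) else h a.1 | a <- w].

Lemma wsubst_cons n m (h : 'I_n -> word m) a w :
  wsubst h (a :: w) = (if a.2 then winv (h a.1) else h a.1) ++ wsubst h w.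
Proof. by []. Qed.

Lemma wsubst_gen n (w : word n) : wsubst (@gen n) w = w.
Proof. by elim: w => [|[i []] w IH] //; rewrite wsubst_cons IH. Qed.

Section MagnusMorphisms.
Variables (R : comNzRingType) (n m : nat) (P : 'M[R]_n) (P' : 'M[R]_m).

Lemma magnus_morph (rho : series R n -> series R m) (h : 'I_n -> word m) :
  {morph rho : x y / x * y} -> rho 1 = 1 ->
  (forall i, rho (mgen P i) = magnus P' (h i)) ->
  forall w, rho (magnus P w) = magnus P' (wsubst h w).
Proof.
move=> rhoM rho1 rho_gen; elim=> [|[i b] w IH]; first by rewrite !magnus_nil.
rewrite magnus_cons rhoM IH wsubst_cons magnus_cat; congr (_ * _).
case: b; rewrite /mletter /= ?rho_gen //.
rewrite -[rho _]mulr1 -(magnus_winvK P' (h i)) mulrA -rho_gen -rhoM.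
by rewrite mgenVK rho1 mul1r.
Qed.

End MagnusMorphisms.

Section EndomorphismSubstitution.
Variables (R : comNzRingType) (n : nat) (P Q : 'M[R]_n).
Hypothesis PQ : P *m Q = 1%:M.
Local Notation series := (series R n).

Lemma cst_mx_inverse (y : 'I_n -> series) i :
  \sum_(l < n) cst (P i l) * \sum_(j < n) cst (Q l j) * y j = y i.
Proof.
under eq_bigr do rewrite mulr_sumr.
rewrite exchange_big /=.
under eq_bigr do under eq_bigr do rewrite mulrA -cstM.
under eq_bigr do rewrite -mulr_suml -cst_sum.
have PQij j : \sum_(l < n) P i l * Q l j = (i == j)%:R.
  by have := congr1 (fun M : 'M[R]_n => M i j) PQ; rewrite !mxE.
under eq_bigr do rewrite PQij.
rewrite (bigD1 i) //= big1 => [|j /negbTE ne]; first by rewrite eqxx cst1 mul1r addr0.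
by rewrite eq_sym ne cst0 mul0r.
Qed.

Lemma ssubst_mgen (phi : 'I_n -> series) (y : 'I_n -> series) :
  (forall l, phi l [::] = 0) -> (forall l, phi l = \sum_(i < n) cst (Q l i) * (y i - 1)) ->
  forall i, ssubst phi (mgen P i) = y i.
Proof.
move=> phi0 phiE i; rewrite /mgen ssubstD // ssubst1 // ssubst_sum //.
under eq_bigr do rewrite ssubstM // ssubst_cst // ssubst_svar // phiE.
by rewrite cst_mx_inverse addrC subrK.
Qed.

Definition endo_series (f : endo n) (l : 'I_n) : series :=
  \sum_(i < n) cst (Q l i) * (magnus P (f i) - 1).

Lemma endo_series_nil f l : endo_series f l [::] = 0.
Proof.
rewrite /endo_series ser_sumE big1 // => i _.
by rewrite cst_mulE ser_subE magnus_const ser_1E subrr mulr0.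
Qed.

Lemma ssubst_endo_mgen f i : ssubst (endo_series f) (mgen P i) = magnus P (f i).
Proof. exact: (ssubst_mgen (y := fun j => magnus P (f j)) (endo_series_nil f)). Qed.

Lemma magnus_wapp f w : ssubst (endo_series f) (magnus P w) = magnus P (wapp f w).
Proof.
have phi0 := endo_series_nil f; rewrite /wapp magnus_reduce.
by apply: magnus_morph => [x y||]; [exact: ssubstM | exact: ssubst1 | exact: ssubst_endo_mgen].
Qed.

Definition coord_series (l : 'I_n) : series := \sum_(i < n) cst (Q l i) * svar i.

Lemma coord_series_nil l : coord_series l [::] = 0.
Proof. by rewrite /coord_series ser_sumE big1 // => i _; rewrite cst_mulE svar_nil mulr0. Qed.

Lemma mgen1 i : mgen (1%:M : 'M[R]_n) i = 1 + svar i.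
Proof.
rewrite /mgen (bigD1 i) //= big1 => [|j /negbTE ne]; first by rewrite mxE eqxx cst1 mul1r addr0.
by rewrite mxE eq_sym ne cst0 mul0r.
Qed.

Lemma magnus_coord w : ssubst coord_series (magnus P w) = magnus 1%:M w.
Proof.
have phi0 := coord_series_nil.
rewrite -[in RHS](wsubst_gen w).
apply: magnus_morph => [x y||i]; [exact: ssubstM | exact: ssubst1 |].
rewrite magnus_gen mgen1; apply: (ssubst_mgen (y := fun j => 1 + svar j)) => // l.
by apply: eq_bigr => j _; rewrite addrC addKr.
Qed.

End EndomorphismSubstitution.

Lemma magnus_inj (R : numDomainType) n (P Q : 'M[R]_n) (p q : word n) : P *m Q = 1%:M -> reduced p -> reduced q ->
  magnus P p = magnus P q -> p = q.
Proof. by move=> PQ rp rq e; apply: (@magnus1_inj R) => //; rewrite -!(magnus_coord PQ) e. Qed.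

Lemma wappK n (f g : endo n) : (forall i, wapp f (g i) = gen i) ->
  forall w, reduced w -> wapp f (wapp g w) = w.
Proof.
move=> fg w rw; have I1 : (1%:M : 'M[int]_n) *m 1%:M = 1%:M := mulmx1 _.
apply: (magnus_inj I1); rewrite ?reduce_reduced //.
rewrite -!(magnus_wapp I1) -[in RHS](wsubst_gen w).
have phi0 := endo_series_nil (1%:M : 'M[int]_n) 1%:M f.
have psi0 := endo_series_nil (1%:M : 'M[int]_n) 1%:M g.
apply: (magnus_morph (rho := ssubst (endo_series 1%:M 1%:M f) \o
                              ssubst (endo_series 1%:M 1%:M g))) => [x y||i] /=.
- by rewrite !ssubstM.
- by rewrite !ssubst1.
by rewrite (ssubst_endo_mgen I1) (magnus_wapp I1) fg.
Qed.

Lemma wmul_idem_nil n (w : word n) : reduced w -> wmul w w = w -> w = [::].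
Proof.
move=> rw /(congr1 (magnus (1%:M : 'M[int]_n))); rewrite magnus_wmul => e.
apply: (@magnus1_eq1 int) => //.
by rewrite -[LHS]mul1r -(magnus_winvKV (1%:M : 'M[int]_n) w) -mulrA e magnus_winvKV.
Qed.

Section Abelianization.
Variable n : nat.
Implicit Types (f g : endo n) (w : word n).
Local Notation I := (1%:M : 'M[int]_n).

Lemma abmxE f i j : abmx f i j = expsum (f i) j.
Proof. by rewrite mxE. Qed.

Lemma magnus_int_linear w m : magnus I w [:: m] = expsum w m.
Proof.
rewrite magnus_linear (bigD1 m) //= big1 => [|j /negbTE ne]; last by rewrite mxE ne mulr0.
by rewrite mxE eqxx mulr1 addr0 intz.
Qed.

Lemma expsum_wapp f w m : expsum (wapp f w) m = \sum_(i < n) expsum w i * abmx f i m.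
Proof.
have I1 : I *m I = I := mulmx1 _.
rewrite -magnus_int_linear -(magnus_wapp I1) (ssubst_linear (endo_series_nil I I f)).
apply: eq_bigr => l _; rewrite magnus_int_linear abmxE /endo_series ser_sumE (bigD1 l) //=.
rewrite big1 => [|i /negbTE ne]; last by rewrite cst_mulE mxE eq_sym ne mul0r.
by rewrite cst_mulE mxE eqxx mul1r ser_subE magnus_int_linear ser_1E subr0 addr0.
Qed.

Lemma abmx_inverse f g : (forall i, wapp g (f i) = gen i) -> abmx f *m abmx g = 1%:M.
Proof.
move=> gf; apply/matrixP => i m; rewrite !mxE.
under eq_bigr do rewrite abmxE.
rewrite -expsum_wapp gf /expsum /gen /= !xpair_eqE andbT andbF /=.
by case: (i == m).
Qed.

Lemma unipotent_ab_inverse f g : inverse_pair f g -> unipotent_ab f -> unipotent_ab g.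
Proof.
move=> [_ gf] [k hk]; exists k.
have fg1 : abmx f *m abmx g = 1%:M := abmx_inverse gf.
have gf1 : abmx g *m abmx f = 1%:M := mulmx1C fg1.
have -> : abmx g - 1%:M = - (abmx g * (abmx f - 1%:M)).
  by rewrite mulrBr mulr1 -mulmxE gf1 opprB.
have comm : GRing.comm (abmx g) (abmx f - 1%:M).
  by rewrite /GRing.comm mulrBr mulrBl mulr1 mul1r -!mulmxE fg1 gf1.
by rewrite exprNn exprMn_comm // hk !mulr0.
Qed.

End Abelianization.

Section WeightFiltration.
Variables (R : numDomainType) (n : nat).
Local Notation series := (series R n).
Variable wt : 'I_n -> nat.
Hypothesis wt_gt0 : forall l, (0 < wt l)%N.

Definition weight (v : seq 'I_n) : nat := \sum_(l <- v) wt l.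

Lemma weight_nil : weight [::] = 0%N. Proof. exact: big_nil. Qed.
Lemma weight_cons l v : weight (l :: v) = (wt l + weight v)%N. Proof. exact: big_cons. Qed.

Definition order_ge (W : nat) (x : series) := forall v, (weight v < W)%N -> x v = 0.

Lemma order_geD W x y : order_ge W x -> order_ge W y -> order_ge W (x + y).
Proof. by move=> hx hy v hv; rewrite ser_addE hx ?hy ?addr0. Qed.

Lemma order_ge_le W W' x : (W' <= W)%N -> order_ge W x -> order_ge W' x.
Proof. by move=> le hx v hv; apply/hx/(leq_trans hv le). Qed.

Lemma order_ge_lquot W l x : order_ge W x -> order_ge (W - wt l) (lquot l x).
Proof. by move=> hx v hv; rewrite lquotE hx // weight_cons; lia. Qed.

Lemma order_ge_natmul W k x : order_ge W x -> order_ge W (k%:R * x).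
Proof. by move=> hx v hv; rewrite -cst_nat cst_mulE hx ?mulr0. Qed.

(* Stated locally at [v]: in [ssubst_order_gt] the right factor is only
   controlled on shorter words. *)
Lemma order_ge_mul_at W1 W2 x y v : order_ge W1 x ->
  (forall u, (size u <= size v)%N -> (weight u < W2)%N -> y u = 0) ->
  (weight v < W1 + W2)%N -> (x * y) v = 0.
Proof.
elim: v x W1 => [|l v IH] x W1 hx hy hv.
  rewrite ser_mul_nil; move: hv; rewrite weight_nil => hv.
  case: W1 hx hv => [|W1] hx hv; first by rewrite (hy [::]) ?mulr0 ?weight_nil.
  by rewrite hx ?mul0r // weight_nil.
rewrite ser_mul_cons (IH _ (W1 - wt l)%N) ?add0r; first last.
- by move: hv; rewrite weight_cons; lia.
- by move=> u hu; apply: hy; apply: leq_trans hu _.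
- exact: order_ge_lquot.
case: W1 hx hv => [|W1] hx hv; last by rewrite hx ?mul0r // weight_nil.
by rewrite hy ?mulr0.
Qed.

Lemma order_ge_mul W1 W2 x y :
  order_ge W1 x -> order_ge W2 y -> order_ge (W1 + W2) (x * y).
Proof. by move=> hx hy v; apply: order_ge_mul_at hx _ => u _; apply: hy. Qed.

Variable phi : 'I_n -> series.
Hypothesis phi0 : forall l, phi l [::] = 0.
Hypothesis phi_svar : forall l, order_ge (wt l).+1 (phi l - svar l).
Local Notation psi := (ssubst phi).

Lemma ssubst_order_gt W d : order_ge W d -> order_ge W.+1 (psi d - d).
Proof.
move=> hd v; elim/size_ind: v d W hd => v IH d W hd hv.
case: v IH hv => [|m v] IH hv; first by rewrite ser_subE ssubst_nil // subrr.
rewrite ssubst_subr // ser_sumE big1 // => l _.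
have hdl := order_ge_lquot (l := l) hd.
have IHl u : (size u < size (m :: v))%N -> (weight u < (W - wt l).+1)%N ->
    (psi (lquot l d) - lquot l d) u = 0.
  by move=> hu; apply: IH hu _ _ hdl.
rewrite ser_addE ser_mul_cons0 ?ser_subE ?phi0 ?svar_nil ?subrr //.
rewrite ser_mul_cons0 ?svar_nil // lquot_svar cst_mulE.
rewrite (@order_ge_mul_at ((wt l).+1 - wt m) (W - wt l)); first last.
- by move: hv; rewrite weight_cons; lia.
- move=> u hu hwu; have := IHl u hu (leq_trans hwu (leqnSn _)).
  by rewrite ser_subE hdl // subr0.
- exact: order_ge_lquot.
rewrite add0r; case: eqP => [ml|]; last by rewrite mul0r.
by rewrite IHl ?mulr0 //; move: hv; rewrite weight_cons ml; lia.
Qed.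

Lemma iter_ssubstB r x y : iter r psi (x - y) = iter r psi x - iter r psi y.
Proof. by elim: r => [|r IH] //=; rewrite IH ssubstB. Qed.

Lemma iter_ssubst1 r : iter r psi 1 = 1.
Proof. by elim: r => [|r IH] //=; rewrite IH ssubst1. Qed.

Lemma iter_ssubst_order_gt r W d : order_ge W d -> order_ge W.+1 (iter r psi d - d).
Proof.
move=> hd; elim: r => [|r IH] /=; first by rewrite subrr.
rewrite -[psi _ - d](subrKA (iter r psi d)); apply: order_geD => //.
apply: ssubst_order_gt; rewrite -[iter r psi d](subrK d).
by apply: order_geD => //; apply: order_ge_le IH.
Qed.

Lemma iter_ssubst_order_ge r W d : order_ge W d -> order_ge W (iter r psi d).
Proof.
move=> hd; rewrite -[iter r psi d](subrK d).
by apply: order_geD => //; apply: order_ge_le (iter_ssubst_order_gt r hd).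
Qed.

(* The image under the Magnus map of the free part of [(p t^r)^k] is
   [a psi^r(a) psi^2r(a) ... ], with [a] the image of [p]. *)
Definition twisted_pow r k (a : series) := iter k (fun x => a * iter r psi x) 1.

Lemma twisted_pow_order r k a : order_ge 1 (a - 1) -> order_ge 1 (twisted_pow r k a - 1).
Proof.
move=> ha; elim: k => [|k IH] /=; first by rewrite subrr.
set X := iter r psi _; have -> : a * X - 1 = (a - 1) * X + (X - 1).
  by rewrite mulrBl mul1r subrKA.
apply: order_geD; first by apply: (@order_ge_mul 1 0) => // v; rewrite ltn0.
by rewrite /X -(iter_ssubst1 r) -iter_ssubstB; apply: iter_ssubst_order_ge.
Qed.

Lemma twisted_pow_diff r k a b W :
  order_ge 1 (a - 1) -> order_ge 1 (b - 1) -> order_ge W (b - a) ->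
  order_ge W.+1 (twisted_pow r k b - twisted_pow r k a - k%:R * (b - a)).
Proof.
move=> ha hb hd; elim: k => [|k IH] /=; first by rewrite subrr mul0r subrr.
set D := twisted_pow r k b - twisted_pow r k a.
have hD : order_ge W D.
  rewrite -[D](subrK (k%:R * (b - a))).
  by apply: order_geD; [apply: order_ge_le IH | apply: order_ge_natmul].
set X := iter r psi (twisted_pow r k b); set Y := iter r psi (twisted_pow r k a).
have -> : b * X - a * Y = (b - a) * X + a * (X - Y) by rewrite mulrBl mulrBr addrA subrK.
rewrite mulrS [(1 + _) * _]mulrDl mul1r opprD addrACA.
have -> : (b - a) * X - (b - a) = (b - a) * (X - 1) by rewrite mulrBr mulr1.
apply: order_geD.
  rewrite -addn1; apply: order_ge_mul => //.
  by rewrite /X -(iter_ssubst1 r) -iter_ssubstB; apply/iter_ssubst_order_ge/twisted_pow_order.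
have -> : X - Y = iter r psi D by rewrite iter_ssubstB.
rewrite -[a in a * _](subrK 1) mulrDl mul1r -addrA.
rewrite -[iter r psi D - _](subrKA D).
apply: order_geD; first by rewrite -add1n; apply: order_ge_mul (iter_ssubst_order_ge r hD).
exact: order_geD (iter_ssubst_order_gt r hD) IH.
Qed.

Lemma order_ge1_const (x : series) : x [::] = 1 -> order_ge 1 (x - 1).
Proof.
move=> x1 [|l v] hv; first by rewrite ser_subE x1 ser_1E subrr.
by move: hv; rewrite weight_cons; have := wt_gt0 l; lia.
Qed.

Lemma twisted_pow_inj r k (a b : series) : (0 < k)%N -> a [::] = 1 -> b [::] = 1 ->
  twisted_pow r k a = twisted_pow r k b -> a = b.
Proof.
move=> k0 a1 b1 e; suff ord W : order_ge W (b - a).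
  apply: series_ext => v; apply/eqP; rewrite eq_sym -subr_eq0; apply/eqP.
  by have := ord (weight v).+1 v (ltnSn _); rewrite ser_subE.
elim: W => [|W IH] v; first by rewrite ltn0.
have := twisted_pow_diff r k (order_ge1_const a1) (order_ge1_const b1) IH.
rewrite e subrr sub0r => h hv; have := h v hv; rewrite ser_oppE -cst_nat cst_mulE.
by move/eqP; rewrite oppr_eq0 mulf_eq0 pnatr_eq0 eqn0Ngt k0 => /eqP.
Qed.

End WeightFiltration.

Section UnipotentTriangular.
Variable n : nat.

Lemma trig_mxM (R : pzSemiRingType) (M N : 'M[R]_n) : is_trig_mx M -> is_trig_mx N ->
  is_trig_mx (M *m N) /\ forall i, (M *m N) i i = M i i * N i i.
Proof.
move=> /is_trig_mxP hM /is_trig_mxP hN; split.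
  apply/is_trig_mxP => i j lij; rewrite mxE big1 // => k _.
  have [ik|ki] := ltnP i k; first by rewrite hM ?mul0r.
  by rewrite hN ?mulr0 // (leq_ltn_trans ki lij).
move=> i; rewrite mxE (bigD1 i) //= big1 ?addr0 // => k /negbTE ne.
have [ik|ki|/val_inj ik] := ltngtP i k; first by rewrite hM ?mul0r.
  by rewrite hN ?mulr0.
by rewrite ik eqxx in ne.
Qed.

Lemma trig_mxX (R : pzSemiRingType) (M : 'M[R]_n) k : is_trig_mx M ->
  is_trig_mx (M ^+ k) /\ forall i, (M ^+ k) i i = M i i ^+ k.
Proof.
move=> hM; elim: k => [|k [IH1 IH2]].
  by split=> [|i]; rewrite expr0 ?scalar_mx_is_trig // mxE eqxx.
have [h1 h2] := trig_mxM hM IH1.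
by split=> [|i]; rewrite exprS -mulmxE // h2 IH2 -exprS.
Qed.

Lemma conj_mxX (R : comUnitRingType) (P B : 'M[R]_n) k : P \in unitmx ->
  (P *m B *m invmx P) ^+ k = P *m B ^+ k *m invmx P.
Proof.
move=> Pu; elim: k => [|k IH]; first by rewrite !expr0 mulmx1 mulmxV.
by rewrite exprS IH -!mulmxE !mulmxA mulmxKV // -(mulmxA _ B) mulmxE -exprS.
Qed.

Lemma unipotent_trig (C : numClosedFieldType) (A : 'M[C]_n) k : (A - 1%:M) ^+ k = 0 ->
  exists2 P : 'M[C]_n, P \in unitmx &
    is_trig_mx (invmx P *m A *m P) /\ forall l, (invmx P *m A *m P) l l = 1.
Proof.
move=> hk; have [|P0 P0u] := @cotrigonalization C n [:: A].
  by move=> X Y; rewrite !inE => /eqP -> /eqP ->.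
rewrite /= andbT /similar_to /conjmx pinvmxE ?unitarymx_unit // => htrig.
have P0unit := unitarymx_unit P0u.
exists (invmx P0); first by rewrite unitmx_inv.
rewrite invmxK; split=> // l; set T := P0 *m A *m invmx P0.
have Tk : (T - 1%:M) ^+ k = 0.
  have -> : T - 1%:M = P0 *m (A - 1%:M) *m invmx P0.
    by rewrite mulmxBr mulmxBl mulmx1 mulmxV.
  by rewrite conj_mxX // hk mulmx0 mul0mx.
have trT1 : is_trig_mx (T - 1%:M).
  apply/is_trig_mxP => i j lij.
  have -> : (T - 1%:M) i j = T i j - (1%:M : 'M[C]_n) i j by rewrite !mxE.
  by rewrite (is_trig_mxP htrig) // mxE -val_eqE /= (ltn_eqF lij) subrr.
have [_ /(_ l)] := trig_mxX k trT1; rewrite Tk !mxE eqxx => /esym/eqP.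
by rewrite expf_eq0 => /andP[_]; rewrite subr_eq0 => /eqP.
Qed.

End UnipotentTriangular.

Lemma endo_series_linear (R : comNzRingType) n (P Q : 'M[R]_n) (f : endo n) l x :
  endo_series P Q f l [:: x] = (Q *m map_mx intr (abmx f) *m P) l x.
Proof.
rewrite /endo_series ser_sumE !mxE; under eq_bigr do rewrite cst_mulE ser_subE magnus_linear.
under [RHS]eq_bigr do rewrite mxE mulr_suml.
rewrite exchange_big /=; apply: eq_bigr => i _; rewrite ser_1E subr0 mulr_sumr.
by apply: eq_bigr => j _; rewrite [map_mx _ _ _ _]mxE abmxE mulrA.
Qed.

Section UnipotentRoots.
Variable n : nat.
Implicit Types (f g : endo n) (x y : selt n).

(* In coordinates where the monodromy is unitriangular, the variable [l] gets
   weight [2n+1-l]: later variables are lighter, and every word of length two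
   is heavier than every letter. *)
Definition flag_weight (l : 'I_n) : nat := (2 * n + 1 - l)%N.

Lemma flag_weight_gt0 l : (0 < flag_weight l)%N.
Proof. by rewrite /flag_weight; have := ltn_ord l; lia. Qed.

Lemma trig_endo_series_order (R : numDomainType) (P Q : 'M[R]_n) f :
  is_trig_mx (Q *m map_mx intr (abmx f) *m P) ->
  (forall l, (Q *m map_mx intr (abmx f) *m P) l l = 1) ->
  forall l, order_ge flag_weight (flag_weight l).+1 (endo_series P Q f l - svar l).
Proof.
move=> trig diag l [|x [|y v]] hv.
- by rewrite ser_subE endo_series_nil svar_nil subrr.
- move: hv; rewrite weight_cons weight_nil addn0 ltnS => hv.
  rewrite ser_subE endo_series_linear /=; have [->|ne] := eqVneq x l.
    by rewrite diag subrr.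
  rewrite (is_trig_mxP trig) ?subrr //.
  move: hv ne (ltn_ord l) (ltn_ord x); rewrite /flag_weight -val_eqE /=; lia.
- move: hv; rewrite !weight_cons /flag_weight.
  by have := ltn_ord x; have := ltn_ord y; have := ltn_ord l; lia.
Qed.

Lemma iter_smul_snd f g j x : (iter j (smul f g x) (sone n)).2 = j%:Z * x.2.
Proof. by elim: j => [|j IH] /=; rewrite ?mul0r // IH -addn1 PoszD mulrDl mul1r addrC. Qed.

Lemma magnus_iter_wapp (R : comNzRingType) (P Q : 'M[R]_n) f r w : P *m Q = 1%:M ->
  magnus P (iter r (wapp f) w) = iter r (ssubst (endo_series P Q f)) (magnus P w).
Proof. by move=> PQ; elim: r => [|r IH] //=; rewrite -IH magnus_wapp. Qed.

Lemma magnus_iter_smul (R : numDomainType) (P Q : 'M[R]_n) f g p r j : P *m Q = 1%:M ->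
  magnus P (iter j (smul f g (p, Posz r)) (sone n)).1 =
  twisted_pow (endo_series P Q f) r j (magnus P p).
Proof.
move=> PQ; elim: j => [|j IH] /=; first exact: magnus_nil.
by rewrite magnus_wmul (magnus_iter_wapp _ _ _ PQ) IH.
Qed.

Lemma unipotent_roots_pos (C : numClosedFieldType) f g k p q r j :
  (map_mx intr (abmx f) - 1%:M) ^+ k = 0 :> 'M[C]_n ->
  reduced p -> reduced q -> (0 < j)%N ->
  iter j (smul f g (p, Posz r)) (sone n) = iter j (smul f g (q, Posz r)) (sone n) -> p = q.
Proof.
move=> unip rp rq j0 e; have [P Pu [trig diag]] := unipotent_trig unip.
have PQ : P *m invmx P = 1%:M by rewrite mulmxV.
apply: (magnus_inj PQ rp rq).
apply: (twisted_pow_inj flag_weight_gt0 (endo_series_nil P (invmx P) f)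
   (trig_endo_series_order trig diag) (r := r) j0); rewrite ?magnus_const //.
by rewrite -!(magnus_iter_smul f g _ r j PQ) e.
Qed.

Lemma unipotent_ab_map (R : comNzRingType) f : unipotent_ab f ->
  exists k, (map_mx intr (abmx f) - 1%:M) ^+ k = 0 :> 'M[R]_n.
Proof.
move=> [k hk]; exists k.
by have := congr1 (map_mx (intr : int -> R)) hk; rewrite rmorphXn rmorphB rmorph1 map_mx0.
Qed.

Lemma epow_opp f g s : epow f g s =1 epow g f (- s).
Proof. by case: s => [[|m]|m]. Qed.

Definition flip_exp x : selt n := (x.1, - x.2).

Lemma flip_expK : involutive flip_exp.
Proof. by case=> w s; rewrite /flip_exp opprK. Qed.

Lemma iter_smul_flip f g j x :
  iter j (smul f g x) (sone n) = flip_exp (iter j (smul g f (flip_exp x)) (sone n)).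
Proof.
elim: j => [|j IH] /=; first by rewrite /flip_exp /= oppr0.
rewrite IH /smul /flip_exp /= epow_opp opprD !opprK.
by case: (iter _ _ _).
Qed.

Lemma unipotent_roots f g x y j : inverse_pair f g -> unipotent_ab f ->
  svalid x -> svalid y -> (0 < j)%N ->
  iter j (smul f g x) (sone n) = iter j (smul f g y) (sone n) -> x = y.
Proof.
case: x y => [p s] [q s'] fg unip; rewrite /svalid /= => rp rq j0 e.
have jz : j%:Z != 0 by rewrite eqz_nat -lt0n.
have ss : s' = s.
  by apply/esym/(mulfI jz); have := congr1 snd e; rewrite !iter_smul_snd.
subst s'; congr (_, _); case: s e => r e.
  have [k hk] := unipotent_ab_map algC unip.
  exact: unipotent_roots_pos hk rp rq j0 e.
have [k hk] := unipotent_ab_map algC (unipotent_ab_inverse fg unip).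
move: e; rewrite !(iter_smul_flip f g j) => /(can_inj flip_expK).
by rewrite /flip_exp /= NegzE opprK; apply: unipotent_roots_pos hk rp rq j0.
Qed.

End UnipotentRoots.

Lemma svalid_iter_smul n (f g : endo n) x j : svalid (iter j (smul f g x) (sone n)).
Proof. by case: j => [|j] //=; rewrite /svalid /wmul reduce_reduced. Qed.

Section Transfer.
Variables (n n' : nat) (f g : endo n) (f' g' : endo n') (F : selt n -> selt n').
Hypothesis iso : siso f g f' g' F.

Lemma siso_one : F (sone n) = sone n'.
Proof.
have [Fvalid Fmul _ _] := iso.
have := Fmul (sone n) (sone n) erefl erefl; have := Fvalid (sone n) erefl.
case: (F (sone n)) => w s; rewrite /svalid /= => rw [/esym ww ss].
have s0 : s = 0 by lia.
by subst s; rewrite (wmul_idem_nil rw ww).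
Qed.

Lemma siso_iter x j : svalid x ->
  F (iter j (smul f g x) (sone n)) = iter j (smul f' g' (F x)) (sone n').
Proof.
have [_ Fmul _ _] := iso.
by move=> vx; elim: j => [|j IH] /=; rewrite ?siso_one // Fmul ?IH ?svalid_iter_smul.
Qed.

Lemma siso_unique_roots : inverse_pair f' g' -> unipotent_ab f' ->
  forall x y j, svalid x -> svalid y -> (0 < j)%N ->
  iter j (smul f g x) (sone n) = iter j (smul f g y) (sone n) -> x = y.
Proof.
have [Fvalid _ Finj _] := iso.
move=> fg' unip x y j vx vy j0 e; apply: Finj => //.
by apply: (unipotent_roots fg' unip (Fvalid _ vx) (Fvalid _ vy) j0); rewrite -!siso_iter // e.
Qed.

End Transfer.

Section Generators.
Variables (n : nat) (f g : endo n).

Lemma sinv_gen u : sinv f g (u, Posz 1) = (wapp g (winv u), Negz 0).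
Proof. by []. Qed.

Lemma svalid_sinv_gen u : svalid (sinv f g (u, Posz 1)).
Proof. exact: reduce_reduced. Qed.

Lemma sinv_gen_inj u v : inverse_pair f g -> reduced u -> reduced v ->
  sinv f g (u, Posz 1) = sinv f g (v, Posz 1) -> u = v.
Proof.
move=> [fg _] ru rv; rewrite !sinv_gen => -[/(congr1 (wapp f))].
by rewrite !wappK ?winv_reduced // => /(can_inj (@winvK n)).
Qed.

Lemma spow_gen_snd u m : (spow f g (u, Posz 1) m).2 = m.
Proof. by case: m => j; rewrite iter_smul_snd ?NegzE /= ?mulr1 ?mulrN1. Qed.

End Generators.

Theorem lemma2p4 (n : nat) (f g : endo n) :
  inverse_pair f g ->
  admits_UPG_monodromy f g ->
  forall u v : word n, reduced u -> reduced v ->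
  (u, Posz 1) <> (v, Posz 1) ->
  ~ common_nontriv_power f g (u, Posz 1) (v, Posz 1).
Proof.
move=> fg [n' [f' [g' [F [fg' [_ unip] iso]]]]] u v ru rv neq [m [k [e ne1]]].
have roots := siso_unique_roots iso fg' unip.
have mk : m = k by rewrite -(spow_gen_snd f g u m) e spow_gen_snd.
subst k; case: m e ne1 => [[|j]|j] e ne1 //.
  exact: neq (roots (u, Posz 1) (v, Posz 1) j.+1 ru rv isT e).
apply/neq; congr (_, _); apply: sinv_gen_inj fg ru rv _.
exact: roots _ _ j.+1 (svalid_sinv_gen _ _ _) (svalid_sinv_gen _ _ _) isT e.
Qed.
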